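(* Let $k$ be a non-archimedean local field of residue characteristic $2$. Let $B(x)=\Delta x^2$ on $k$, where $\Delta$ is a non-square unit of $\mathfrak o$ with quadratic defect $\varpi^d\mathfrak o$. Let $z=q^{-\beta}$, $w=zq^{-1}$, and $t\in\mathfrak o\setminus\{0\}$ with $|t|=q^{-T}$. If $|2|\ge|\varpi^d t^2|$, then \[ X^B(\beta;t^2)=|\varpi|^{\lceil e/2\rceil}\,\frac{1-(zw)^{T+\lceil (d+1-e)/2\rceil}}{1-zw} + w\,|\varpi|^{\lfloor e/2\rfloor}\,\frac{1-(zw)^{T+\lfloor (d+1-e)/2\rfloor}}{1-zw}, \] and $X^B(\beta;t^2)=0$ otherwise.
   Context: $k$ has ring of integers $\mathfrak o$, uniformizer $\varpi$, residue field of cardinality $q$, absolute value normalized by $|\varpi|=q^{-1}$, and $e=\operatorname{ord}(2)$ is the ramification index. On $\mathfrak o^n$ use the additive Haar measure of total mass $1$. For a quadratic form $B$ on $k^n$, $\rho\in\mathfrak o$ and integer $\ell\ge0$: $X_\ell^B(\rho)=\operatorname{meas}\{x\in\mathfrak o^n: B(x)-\rho\in 2\varpi^\ell\mathfrak o\}$ and $X^B(\beta;\rho)=\sum_{\ell\ge0}z^\ell X_\ell^B(\rho)$ with $z=q^{-\beta}$. The quadratic defect of $\rho\in k$ is the intersection of all ideals $b\mathfrak o$ over those $b\in k$ for which $\rho-b$ is a square in $k$. *)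

From HB Require Import structures.
From mathcomp Require Import all_boot all_order all_algebra.
From mathcomp Require Import all_classical all_reals.
From mathcomp Require Import complex.
Set Implicit Arguments. Unset Strict Implicit. Unset Printing Implicit Defensive.
Import Order.TTheory GRing.Theory Num.Theory.
Local Open Scope ring_scope.
Local Open Scope classical_set_scope.
Local Open Scope complex_scope.

(* A field K with a discrete valuation v : K -> int (value at 0 is     *)
(* irrelevant junk; 0 is treated separately everywhere).               *)

Definition inO (K : fieldType) (v : K -> int) (x : K) : Prop :=
  x = 0 \/ (0 <= v x)%R.

Definition in_ideal (K : fieldType) (v : K -> int) (b x : K) : Prop :=
  exists a : K, inO v a /\ x = b * a.

Definition congr_mod (K : fieldType) (v : K -> int) (pi : K) (N : nat) (x y : K) : Prop :=
  in_ideal v (pi ^+ N) (x - y).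

(* (K, v) is a non-archimedean local field with uniformizer pi and residue
   field of cardinality q: v is a discrete valuation with v pi = 1, K is
   complete for it, and o / pi o has exactly q elements. *)
Record is_local_field (K : fieldType) (v : K -> int) (pi : K) (q : nat) : Prop := {
  lf_mul : forall x y : K, x != 0 -> y != 0 -> v (x * y) = v x + v y;
  lf_add : forall x y : K, x != 0 -> y != 0 -> x + y != 0 ->
             Num.min (v x) (v y) <= v (x + y);
  lf_pi_neq0 : pi != 0;
  lf_pi_val : v pi = 1;
  lf_residue : exists reps : seq K,
      size reps = q /\
      (forall r, r \in reps -> inO v r) /\
      (forall i j, (i < j < size reps)%N ->
          ~ congr_mod v pi 1 (nth 0 reps i) (nth 0 reps j)) /\
      (forall x, inO v x -> exists2 r, r \in reps & congr_mod v pi 1 x r);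
  lf_complete : forall u : nat -> K,
      (forall n : nat, exists N : nat, forall m p : nat, (N <= m)%N -> (N <= p)%N ->
          congr_mod v pi n (u m) (u p)) ->
      exists l : K, forall n : nat, exists N : nat, forall m : nat, (N <= m)%N ->
          congr_mod v pi n (u m) l
}.

Definition absv (R : realType) (K : fieldType) (v : K -> int) (q : nat) (x : K) : R :=
  if x == 0 then 0 else (q%:R : R) ^ (- v x).

Definition qdefect (K : fieldType) (v : K -> int) (rho : K) : set K :=
  [set x | forall b : K, (exists y : K, rho - b = y ^+ 2) -> in_ideal v b x].

(* Haar measure of total mass 1 on o (n = 1), for a closed set S:      *)
(*   meas S = lim_N  #{classes of o / pi^N o meeting S} / q^N          *)
(* (a decreasing sequence, so the limit is the infimum).               *)

Definition nclasses (R : realType) (K : fieldType) (v : K -> int) (pi : K)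
    (N : nat) (S : set K) : R :=
  sup [set (size l)%:R | l in
        [set l : seq K | (forall x, x \in l -> inO v x /\ S x) /\
           (forall i j, (i < j < size l)%N ->
              ~ congr_mod v pi N (nth 0 l i) (nth 0 l j))]].

Definition haar_o (R : realType) (K : fieldType) (v : K -> int) (pi : K) (q : nat)
    (S : set K) : R :=
  inf [set nclasses R v pi N S / (q%:R ^+ N) | N in [set: nat]].

Definition Xl (R : realType) (K : fieldType) (v : K -> int) (pi : K) (q : nat)
    (B : K -> K) (rho : K) (l : nat) : R :=
  haar_o R v pi q [set x | inO v x /\ in_ideal v (2 * pi ^+ l) (B x - rho)].

Definition series_to (R : realType) (a : nat -> R[i]) (L : R[i]) : Prop :=
  forall eps : R, 0 < eps -> exists N : nat, forall n : nat, (N <= n)%N ->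
    `| \sum_(i < n) a i - L | < eps%:C.

(* X^B(beta; rho) = sum_l z^l X_l^B(rho) = L  (z = q^{-beta}) *)
Definition XB_is (R : realType) (K : fieldType) (v : K -> int) (pi : K) (q : nat)
    (B : K -> K) (z : R[i]) (rho : K) (L : R[i]) : Prop :=
  series_to (fun l => z ^+ l * (Xl R v pi q B rho l)%:C) L.

(* For each l the set {x in o : Delta x^2 = t^2 mod 2 pi^l} is a ball of
   radius q^-c, c = ceil((e + l)/2), or empty. Writing n = e + l: if n <= 2T the
   congruence forces x = 0 mod pi^c; if 2T < n <= 2T + d one picks s0 with
   Delta = s0^2 mod pi^d and the solutions are x = t/s0 mod pi^c (this uses
   d <= 2e, i.e. Hensel's lemma for 1 + 4 pi o); if n > 2T + d there is no
   solution, since Delta - s^2 has valuation at most d for every s. Hence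
   X_l = q^-c for e + l <= 2T + d and X_l = 0 afterwards, and the series
   X^B(beta; t^2) is a finite sum whose even and odd terms form two geometric
   progressions of ratio z w. *)
From HB Require Import structures.
From mathcomp Require Import all_boot all_order all_algebra.
From mathcomp Require Import all_classical all_reals.
From mathcomp Require Import complex.
From mathcomp Require Import zify ring.
Import Order.TTheory GRing.Theory Num.Theory.
Local Open Scope ring_scope.
Set Implicit Arguments. Unset Strict Implicit. Unset Printing Implicit Defensive.

Lemma pairwise_allpairs (S T U : eqType) (r1 : rel S) (r2 : rel U) (f : S -> T -> U)
    (s : seq S) (t : seq T) :
  pairwise r1 s -> (forall x, pairwise r2 [seq f x y | y <- t]) ->
  (forall x x' y y', r1 x x' -> y \in t -> y' \in t -> r2 (f x y) (f x' y')) ->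
  pairwise r2 [seq f x y | x <- s, y <- t].
Proof.
move=> + ht hr12; elim: s => [|x s IH] //= /andP [hx hs].
rewrite pairwise_cat ht IH // !andbT.
apply/allrelP => u w /mapP [y hy ->] /allpairsP [[x' y'] [/= hx' hy' ->]].
by apply: hr12 => //; move/allP: hx; apply.
Qed.

Lemma sup_eq_max (R : realType) (E : set R) x :
  E x -> (forall y, E y -> y <= x) -> sup E = x.
Proof.
move=> hx hub; apply/eqP; rewrite eq_le; apply/andP; split.
  by apply: ge_sup; [exists x|exact: hub].
by apply: ub_le_sup => //; exists x => y; exact: hub.
Qed.

Lemma inf_eq_min (R : realType) (E : set R) x :
  E x -> (forall y, E y -> x <= y) -> inf E = x.
Proof.
move=> hx hlb; apply/eqP; rewrite eq_le; apply/andP; split.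
  by apply: ge_inf => //; exists x => y; exact: hlb.
by apply: lb_le_inf; [exists x|exact: hlb].
Qed.

Section Valuation.
Variables (K : fieldType) (v : K -> int) (pi : K) (q : nat).
Hypothesis hK : is_local_field v pi q.

Definition vge (n : int) (x : K) : Prop := x = 0 \/ n <= v x.

Lemma valM (x y : K) : x != 0 -> y != 0 -> v (x * y) = v x + v y.
Proof. by move=> x0 y0; rewrite (lf_mul hK x0 y0). Qed.

Lemma val1 : v 1 = 0.
Proof.
have := valM (oner_neq0 K) (oner_neq0 K); rewrite mulr1 => h.
by apply/eqP; rewrite -(addrI (v 1) (etrans (esym h) (esym (addr0 _)))).
Qed.

Lemma valN x : v (- x) = v x.
Proof.
have N1 : (-1 : K) != 0 by rewrite oppr_eq0 oner_neq0.
have valN1 : v (-1) = 0.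
  by have := valM N1 N1; rewrite mulrNN mulr1 val1; lia.
case: (eqVneq x 0) => [->|x0]; first by rewrite oppr0.
by rewrite -mulN1r valM // valN1 add0r.
Qed.

Lemma valX x n : x != 0 -> v (x ^+ n) = n%:Z * v x.
Proof.
move=> x0; elim: n => [|n IH]; first by rewrite expr0 val1 mul0r.
by rewrite exprS valM ?expf_neq0 // IH intS mulrDl mul1r.
Qed.

Lemma val_sqr x : x != 0 -> v (x ^+ 2) = v x + v x.
Proof. by move=> x0; rewrite valX //; lia. Qed.

Lemma valV x : x != 0 -> v x^-1 = - v x.
Proof.
move=> x0; have := valM x0 (invr_neq0 x0); rewrite mulfV // val1 => /eqP.
by rewrite eq_sym addr_eq0 => /eqP ->; rewrite opprK.
Qed.

Lemma vge_val x : vge (v x) x. Proof. by right. Qed.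

Lemma vgeW m n x : m <= n -> vge n x -> vge m x.
Proof. by move=> mn [->|h]; [left|right; exact: le_trans h]. Qed.

Lemma vgeD n x y : vge n x -> vge n y -> vge n (x + y).
Proof.
move=> [->|hx]; first by rewrite add0r.
move=> [->|hy]; first by rewrite addr0; right.
case: (eqVneq x 0) => [->|x0]; first by rewrite add0r; right.
case: (eqVneq y 0) => [->|y0]; first by rewrite addr0; right.
case: (eqVneq (x + y) 0) => [->|s0]; first by left.
by right; apply: le_trans (lf_add hK x0 y0 s0); rewrite le_min hx hy.
Qed.

Lemma vgeN n x : vge n x -> vge n (- x).
Proof. by move=> [->|h]; [left; rewrite oppr0|right; rewrite valN]. Qed.

Lemma vgeB n x y : vge n x -> vge n y -> vge n (x - y).
Proof. by move=> hx /vgeN; apply: vgeD. Qed.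

Lemma vgeM a b x y : vge a x -> vge b y -> vge (a + b) (x * y).
Proof.
move=> [->|hx]; first by rewrite mul0r; left.
move=> [->|hy]; first by rewrite mulr0; left.
case: (eqVneq x 0) => [->|x0]; first by rewrite mul0r; left.
case: (eqVneq y 0) => [->|y0]; first by rewrite mulr0; left.
by right; rewrite valM // lerD.
Qed.

Lemma vge_sqr n x : vge n x -> vge (n + n) (x ^+ 2).
Proof. by move=> h; rewrite expr2; apply: vgeM. Qed.

Lemma vge_eq0 x : (forall n : nat, vge n%:Z x) -> x = 0.
Proof.
move=> h; case: (eqVneq x 0) => // x0.
by case: (h `|v x|.+1) => [->//|]; lia.
Qed.

Lemma not_vge n x : ~ vge n x <-> x != 0 /\ v x < n.
Proof.
split; last by move=> [x0 hx] [/eqP|]; [rewrite (negbTE x0)|rewrite leNgt hx].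
case: (eqVneq x 0) => [x0 h|x0 h]; first by case: h; left.
by split=> //; rewrite ltNge; apply/negP => hx; apply: h; right.
Qed.

Lemma val_addr_dominant x y : x != 0 -> vge (v x + 1) y ->
  x + y != 0 /\ v (x + y) = v x.
Proof.
move=> x0 hy; have xy0 : x + y != 0.
  apply/eqP => /(canRL (addKr x)); rewrite addr0 => yE.
  case: hy; rewrite yE ?valN; last by lia.
  by move/eqP; rewrite oppr_eq0 (negbTE x0).
split=> //.
have : vge (Num.min (v (x + y)) (v x + 1)) (x + y - y).
  by apply: vgeB; [apply: vgeW (vge_val _)|apply: vgeW hy]; rewrite ge_min lexx ?orbT.
rewrite addrK => -[/eqP|]; rewrite ?(negbTE x0) // ge_min => hx.
have : vge (v x) (x + y) by apply: vgeD (vge_val _) (vgeW _ hy); rewrite lerDl.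
case=> [/eqP|h]; rewrite ?(negbTE xy0) //; apply/eqP; rewrite eq_le h.
by case/orP: hx => //; lia.
Qed.

Lemma not_vge_addr n x y : x != 0 -> v x < n -> vge (v x + 1) y -> ~ vge n (x + y).
Proof.
move=> x0 hx hy; have [s0 vs] := val_addr_dominant x0 hy.
by apply/not_vge; rewrite vs.
Qed.

Lemma in_idealE b x : b != 0 -> (in_ideal v b x <-> vge (v b) x).
Proof.
move=> b0; split.
  move=> [a [[->|ha] ->]]; first by rewrite mulr0; left.
  case: (eqVneq a 0) => [->|a0]; first by rewrite mulr0; left.
  by right; rewrite valM // lerDl.
case: (eqVneq x 0) => [-> _|x0 [/eqP|hx]]; rewrite ?(negbTE x0) //.
  by exists 0; split; [left|rewrite mulr0].
exists (b^-1 * x); split; last by rewrite mulrA mulfV ?mul1r.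
by right; rewrite valM ?invr_neq0 // valV //; lia.
Qed.

Lemma pi_neq0 : pi != 0. Proof. exact: lf_pi_neq0 hK. Qed.
Lemma val_pi : v pi = 1. Proof. exact: lf_pi_val hK. Qed.
Lemma piX_neq0 n : pi ^+ n != 0. Proof. by rewrite expf_neq0 // pi_neq0. Qed.
Lemma val_piX n : v (pi ^+ n) = n%:Z. Proof. by rewrite valX ?pi_neq0 // val_pi mulr1. Qed.

Lemma congr_modE N x y : congr_mod v pi N x y <-> vge N%:Z (x - y).
Proof. by rewrite /congr_mod in_idealE ?piX_neq0 // val_piX. Qed.

Lemma vge_cauchy_lim (u : nat -> K) :
  (forall n m : nat, vge n%:Z (u (m + n)%N - u n)) ->
  exists l, forall n : nat, vge n%:Z (u n - l).
Proof.
move=> hu.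
have cauchy n : exists N, forall m p, (N <= m)%N -> (N <= p)%N ->
    congr_mod v pi n (u m) (u p).
  exists n => m p hm hp; apply/congr_modE.
  have -> : u m - u p = (u (m - n + n)%N - u n) - (u (p - n + n)%N - u n).
    by rewrite !subnK //; ring.
  exact: vgeB.
have [l hl] := lf_complete hK cauchy.
exists l => n; have [N hN] := hl n.
have -> : u n - l = (u (N + n)%N - l) - (u (N + n)%N - u n) by ring.
by apply: vgeB (hu _ _); apply/congr_modE/hN; exact: leq_addr.
Qed.

(* The iteration y |-> g - y^2 is a contraction of pi o. *)
Lemma exists_add_sqr_eq g : vge 1 g -> exists l, l + l ^+ 2 = g.
Proof.
move=> hg.
pose y := fix y k := if k is k'.+1 then g - y k' ^+ 2 else 0.
have yS k : y k.+1 = g - y k ^+ 2 by [].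
have y1 k : vge 1 (y k).
  elim: k => [|k IH]; first by left.
  by rewrite yS; apply: vgeB hg (vgeW _ (vge_sqr IH)).
have incr k : vge k.+1%:Z (y k.+1 - y k).
  elim: k => [|k IH]; first by rewrite yS expr2 mulr0 !subr0.
  have -> : y k.+2 - y k.+1 = - ((y k.+1 - y k) * (y k.+1 + y k)) by rewrite !yS; ring.
  by apply/vgeN/(vgeW _ (vgeM IH (vgeD (y1 _) (y1 _)))); lia.
have [l hl] : exists l, forall n : nat, vge n%:Z (y n - l).
  apply: vge_cauchy_lim => n; elim=> [|m IH]; first by rewrite subrr; left.
  have -> : y (m.+1 + n)%N - y n = (y (m + n).+1 - y (m + n)%N) + (y (m + n)%N - y n).
    by rewrite addSn; ring.
  by apply: vgeD IH; apply: vgeW (incr _); lia.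
have l1 : vge 1 l.
  have -> : l = y 1 - (y 1 - l) by ring.
  exact: vgeB (y1 1) (hl 1%N).
exists l; apply/eqP; rewrite -subr_eq0; apply/eqP/vge_eq0 => n.
have -> : l + l ^+ 2 - g = - (y n.+1 - l) - (y n - l) * (l + y n) by rewrite yS; ring.
apply: vgeB; first by apply/vgeN/(vgeW _ (hl _)); lia.
by apply: vgeW (vgeM (hl n) (vgeD l1 (y1 n))); lia.
Qed.

Lemma sqr_1_add c : (2 : K) != 0 -> vge (v 2 + v 2 + 1) c -> exists y, 1 + c = y ^+ 2.
Proof.
move=> h2 hc; have h4 : (2 * 2 : K) != 0 by rewrite mulf_neq0.
have [l hl] : exists l, l + l ^+ 2 = c / (2 * 2).
  apply: exists_add_sqr_eq; have := vgeM hc (vge_val (2 * 2 : K)^-1).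
  by rewrite valV // valM //; apply: vgeW; lia.
by exists (1 + 2 * l); rewrite -(divfK h4 c) -hl; ring.
Qed.

Lemma Dsqr_congr_ball0 (D t x : K) (n : int) (c : nat) :
  v D = 0 -> D != 0 -> t != 0 -> n <= (c + c)%:Z -> (c + c)%:Z <= n + 1 ->
  n <= v t + v t ->
  vge n (D * x ^+ 2 - t ^+ 2) <-> vge c%:Z x.
Proof.
move=> vD D0 t0 nc cn nt; split; last first.
  move=> hx; apply: vgeB; last by apply: vgeW (vge_sqr (vge_val t)).
  by have := vgeM (vge_val D) (vge_sqr hx); rewrite vD add0r; apply: vgeW; lia.
move=> h; case: (pselect (vge c%:Z x)) => // /not_vge [x0 vx]; exfalso.
have Dx0 : D * x ^+ 2 != 0 by rewrite mulf_neq0 ?expf_neq0.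
have vDx : v (D * x ^+ 2) = v x + v x by rewrite valM ?expf_neq0 // vD val_sqr // add0r.
apply: (not_vge_addr (n := n) Dx0); [rewrite vDx; lia| |exact: h].
by right; rewrite valN val_sqr // vDx; lia.
Qed.

(* With s0^2 close to D, the factorisation D x^2 - t^2 = y (y + 2t) + (D - s0^2) x^2,
   y = s0 x - t, reduces the congruence to one on y. *)
Lemma Dsqr_congr_ball (D t s0 x : K) (n : int) (c d : nat) :
  v D = 0 -> t != 0 -> s0 != 0 -> v s0 = 0 -> (2 : K) != 0 ->
  vge d%:Z (D - s0 ^+ 2) -> (1 <= d)%N -> d%:Z <= v 2 + v 2 ->
  v t + v t < n -> n <= v t + v t + d%:Z ->
  n <= (c + c)%:Z -> (c + c)%:Z <= n + 1 -> vge 0 x ->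
  vge n (D * x ^+ 2 - t ^+ 2) <-> vge c%:Z (x - t / s0).
Proof.
move=> vD t0 s00 vs0 h2 hb d1 d2e tn nd nc cn hx.
set b := D - s0 ^+ 2; set y := s0 * x - t.
have eqD : D * x ^+ 2 - t ^+ 2 = y * (y + 2 * t) + b * x ^+ 2 by rewrite /y /b; ring.
have xE : x = s0^-1 * (y + t) by rewrite /y subrK mulrA mulVf // mul1r.
have vs0V : v s0^-1 = 0 by rewrite valV // vs0 oppr0.
have v2t : v (2 * t) = v 2 + v t by rewrite valM.
have vge_x m : vge m (y + t) -> vge m x.
  by move=> h; rewrite xE; have := vgeM (vge_val s0^-1) h; rewrite vs0V add0r.
have -> : vge c%:Z (x - t / s0) <-> vge c%:Z y.
  have -> : x - t / s0 = s0^-1 * y by rewrite /y mulrBr mulrA mulVf // mul1r mulrC.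
  split=> h; last by have := vgeM (vge_val s0^-1) h; rewrite vs0V add0r.
  by have := vgeM (vge_val s0) h; rewrite vs0 add0r mulrA mulfV // mul1r.
rewrite eqD; split; last first.
  move=> hy; have hxt : vge (v t) x.
    by apply: vge_x; apply: vgeD (vge_val t); apply: vgeW hy; lia.
  apply: vgeD; last by have := vgeM hb (vge_sqr hxt); apply: vgeW; lia.
  have h2t : vge c%:Z (2 * t) by apply: vgeW (vge_val _); rewrite v2t; lia.
  by have := vgeM hy (vgeD hy h2t); apply: vgeW; lia.
move=> h; case: (pselect (vge c%:Z y)) => // /not_vge [y0 vy]; exfalso.
have [y2t0 vy2t] : y + 2 * t != 0 /\ v (y + 2 * t) = v y.
  by apply: val_addr_dominant => //; right; rewrite v2t; lia.
have yy0 : y * (y + 2 * t) != 0 by rewrite mulf_neq0.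
have vyy : v (y * (y + 2 * t)) = v y + v y by rewrite valM // vy2t.
apply: (not_vge_addr (n := n) yy0); [rewrite vyy; lia| |exact: h].
have hxm : vge (Num.min (v y) (v t)) x.
  by apply: vge_x; apply: vgeD; apply: vgeW (vge_val _); rewrite ge_min lexx ?orbT.
by rewrite vyy; have := vgeM hb (vge_sqr hxm); apply: vgeW; lia.
Qed.

Lemma Dsqr_congr_none (D t x : K) (n : int) (d : nat) :
  v D = 0 -> D != 0 -> t != 0 ->
  (forall s, D - s ^+ 2 != 0 /\ v (D - s ^+ 2) <= d%:Z) ->
  v t + v t + d%:Z < n -> ~ vge n (D * x ^+ 2 - t ^+ 2).
Proof.
move=> vD D0 t0 hs hn.
have tt0 : - t ^+ 2 != 0 by rewrite oppr_eq0 expf_neq0.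
have vtt : v (- t ^+ 2) = v t + v t by rewrite valN val_sqr.
case: (eqVneq x 0) => [->|x0].
  by rewrite expr0n /= mulr0 add0r; apply/not_vge; split=> //; rewrite vtt; lia.
have Dx0 : D * x ^+ 2 != 0 by rewrite mulf_neq0 ?expf_neq0.
have vDx : v (D * x ^+ 2) = v x + v x by rewrite valM ?expf_neq0 // vD val_sqr // add0r.
case: (ltgtP (v x) (v t)) => hxt.
- apply: (not_vge_addr Dx0); first by rewrite vDx; lia.
  by right; rewrite vtt vDx; lia.
- rewrite addrC; apply: (not_vge_addr tt0); first by rewrite vtt; lia.
  by right; rewrite vtt vDx; lia.
- have -> : D * x ^+ 2 - t ^+ 2 = x ^+ 2 * (D - (t / x) ^+ 2).
    by rewrite mulrBr mulrC expr_div_n mulrCA divff ?mulr1 // expf_neq0.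
  have [h0 hv] := hs (t / x).
  apply/not_vge; split; first by rewrite mulf_neq0 ?expf_neq0.
  rewrite valM ?expf_neq0 // val_sqr // hxt.
  by move: hv; set vb := v (D - _); lia.
Qed.

Section QuadraticDefect.
Variables (D : K) (d : nat).
Hypotheses (hDunit : v D = 0) (hDns : ~ exists y : K, D = y ^+ 2)
  (hdef : forall x : K, qdefect v D x <-> in_ideal v (pi ^+ d) x).

Lemma nonsquare_neq0 : D != 0.
Proof. by apply/eqP => D0; apply: hDns; exists 0; rewrite D0 expr0n. Qed.

Lemma val_sub_sqr_le s : D - s ^+ 2 != 0 /\ v (D - s ^+ 2) <= d%:Z.
Proof.
have b0 : D - s ^+ 2 != 0.
  by apply/eqP => /eqP; rewrite subr_eq0 => /eqP DE; apply: hDns; exists s.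
split=> //.
have /hdef : in_ideal v (pi ^+ d) (pi ^+ d) by exists 1; split; [right; rewrite val1|rewrite mulr1].
move=> /(_ (D - s ^+ 2)) []; first by exists s; ring.
move=> a [ha aE]; have /in_idealE : in_ideal v (D - s ^+ 2) (pi ^+ d) by exists a.
by case/(_ b0) => [/eqP|]; rewrite ?(negbTE (piX_neq0 d)) ?val_piX.
Qed.

Lemma defect_attained : (1 <= d)%N -> exists s0, vge d%:Z (D - s0 ^+ 2).
Proof.
move=> d1; apply: contrapT => hn.
have lt s : v (D - s ^+ 2) < d%:Z.
  case: (pselect (vge d%:Z (D - s ^+ 2))) => [h|/not_vge[]//]; by case: hn; exists s.
have /hdef : qdefect v D (pi ^+ d.-1).
  move=> b [y hy]; have -> : b = D - y ^+ 2 by rewrite -hy; ring.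
  apply/in_idealE; first by case: (val_sub_sqr_le y).
  by right; rewrite val_piX -subn1; have := lt y; set vb := v _; lia.
rewrite in_idealE ?piX_neq0 // val_piX => -[/eqP|]; rewrite ?(negbTE (piX_neq0 _)) //.
by rewrite val_piX -subn1; lia.
Qed.

Lemma defect_unit_witness : (1 <= d)%N ->
  exists s0, [/\ vge d%:Z (D - s0 ^+ 2), s0 != 0 & v s0 = 0].
Proof.
move=> d1; have [s0 hs0] := defect_attained d1.
have D0 := nonsquare_neq0.
have s00 : s0 != 0.
  apply/eqP => s0E; move: hs0; rewrite s0E expr0n /= subr0.
  by case=> [/eqP|]; [rewrite (negbTE D0)|rewrite hDunit; lia].
have : v (s0 ^+ 2) = 0.
  have -> : s0 ^+ 2 = D + - (D - s0 ^+ 2) by ring.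
  have hb : vge (v D + 1) (- (D - s0 ^+ 2)).
    by apply/vgeN/(vgeW _ hs0); rewrite hDunit; lia.
  by have [_ ->] := val_addr_dominant D0 hb.
by rewrite val_sqr // => vs0; exists s0; split=> //; lia.
Qed.

(* If 2 v 2 < d then D = s0^2 (1 + c) with c in 4 pi o, a square by [sqr_1_add]. *)
Lemma defect_le_val2 : (2 : K) != 0 -> d%:Z <= v 2 + v 2.
Proof.
move=> h2; case: (posnP d) => [->|d1].
  suff : 0 <= v 2 by lia.
  by have := lf_add hK (oner_neq0 K) (oner_neq0 K) h2; rewrite val1 minxx.
have [s0 [hs0 s00 vs0]] := defect_unit_witness d1.
rewrite leNgt; apply/negP => hd.
have hc : vge (v 2 + v 2 + 1) ((D - s0 ^+ 2) / s0 ^+ 2).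
  have := vgeM hs0 (vge_val (s0 ^+ 2)^-1).
  by rewrite valV ?expf_neq0 // val_sqr // vs0; apply: vgeW; lia.
have [y hy] := sqr_1_add h2 hc.
apply: hDns; exists (s0 * y); rewrite exprMn -hy mulrDr mulr1 mulrCA divff ?expf_neq0 //.
by rewrite mulr1; ring.
Qed.

End QuadraticDefect.

Section ResidueCode.
Variable reps : seq K.
Hypothesis reps_cover :
  forall x, inO v x -> exists2 r, r \in reps & congr_mod v pi 1 x r.

(* [residue_code N x] reads the first N pi-adic digits of x, with digits in
   [reps], as a number written in base [size reps]. *)
Definition rep_index (x : K) : nat := find (fun r => `[< congr_mod v pi 1 x r >]) reps.
Definition digit_shift (x : K) : K := (x - nth 0 reps (rep_index x)) / pi.
Fixpoint residue_code (N : nat) (x : K) : nat :=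
  if N is N'.+1 then (rep_index x + size reps * residue_code N' (digit_shift x))%N
  else 0%N.

Lemma has_rep x : inO v x -> has (fun r => `[< congr_mod v pi 1 x r >]) reps.
Proof. by move=> /reps_cover [r hr hc]; apply/hasP; exists r => //; apply: asboolT. Qed.

Lemma rep_index_lt x : inO v x -> (rep_index x < size reps)%N.
Proof. by move=> hx; rewrite -has_find has_rep. Qed.

Lemma digit_shift_inO x : inO v x -> inO v (digit_shift x).
Proof.
move=> hx; have /asboolW/congr_modE hr := nth_find 0 (has_rep hx).
by have := vgeM hr (vge_val pi^-1); rewrite valV ?pi_neq0 // val_pi addrN.
Qed.

Lemma residue_code_lt N x : inO v x -> (residue_code N x < size reps ^ N)%N.
Proof.
elim: N x => [|N IH] x hx /=; first by rewrite expn0.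
have := rep_index_lt hx; have := IH _ (digit_shift_inO hx).
by rewrite expnS; nia.
Qed.

Lemma residue_code_inj N x y : inO v x -> inO v y ->
  residue_code N x = residue_code N y -> vge N%:Z (x - y).
Proof.
elim: N x y => [|N IH] x y hx hy /=; first by move=> _; apply: vgeB.
move=> he; have ltx := rep_index_lt hx; have lty := rep_index_lt hy.
have ei : rep_index x = rep_index y.
  have := congr1 (modn^~ (size reps)) he.
  rewrite /= ![(rep_index _ + _)%N]addnC ![(size reps * _)%N]mulnC !modnMDl.
  by rewrite !modn_small.
have /IH : residue_code N (digit_shift x) = residue_code N (digit_shift y).
  by move: he; rewrite ei => /addnI /eqP; rewrite eqn_mul2l; case/orP => /eqP //; lia.
have -> : digit_shift x - digit_shift y = (x - y) / pi.
  by rewrite /digit_shift ei; field; rewrite pi_neq0.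
move=> /(_ (digit_shift_inO hx) (digit_shift_inO hy)) h.
have := vgeM h (vge_val pi); rewrite val_pi divfK ?pi_neq0 //.
by apply: vgeW; lia.
Qed.

Lemma size_incongruent_le N (l : seq K) : (forall x, x \in l -> inO v x) ->
  (forall i j, (i < j < size l)%N -> ~ congr_mod v pi N (nth 0 l i) (nth 0 l j)) ->
  (size l <= size reps ^ N)%N.
Proof.
move=> hl hinc.
have hu : uniq (map (residue_code N) l).
  apply/(uniqP 0%N) => i j; rewrite !inE size_map => hi hj.
  rewrite !(nth_map 0) // => he.
  have hi' := hl _ (mem_nth 0 hi); have hj' := hl _ (mem_nth 0 hj).
  case: (ltngtP i j) => hij //; exfalso.
    by apply: (hinc i j); [rewrite hij hj|apply/congr_modE; exact: residue_code_inj].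
  by apply: (hinc j i); [rewrite hij hi|apply/congr_modE; exact: residue_code_inj].
have hs : {subset map (residue_code N) l <= iota 0 (size reps ^ N)}.
  by move=> c /mapP [x hx ->]; rewrite mem_iota add0n; exact: residue_code_lt (hl _ hx).
by have := uniq_leq_size hu hs; rewrite size_map size_iota.
Qed.

End ResidueCode.

Definition incongr (N : nat) : rel K := fun x y => ~~ `[< congr_mod v pi N x y >].

Lemma incongruent_ball_family (reps : seq K) (hro : forall r, r \in reps -> inO v r)
    (hinc : forall i j, (i < j < size reps)%N ->
      ~ congr_mod v pi 1 (nth 0 reps i) (nth 0 reps j))
    (a : K) (c k : nat) : inO v a ->
  exists l : seq K, [/\ size l = (size reps ^ k)%N,
    forall x, x \in l -> inO v x /\ vge c%:Z (x - a) & pairwise (incongr (c + k)) l].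
Proof.
move=> ha; have hr : pairwise (incongr 1) reps.
  apply/(pairwiseP 0) => i j; rewrite !inE => hi hj hij.
  by apply/asboolPn; apply: hinc; rewrite hij hj.
elim: k => [|k [l [hs hl hp]]].
  exists [:: a]; split=> // x; rewrite inE => /eqP ->.
  by split=> //; rewrite subrr; left.
set p := pi ^+ (c + k).
have vp : v p = (c + k)%N%:Z by rewrite val_piX.
have hpr r : r \in reps -> vge (c + k)%N%:Z (p * r).
  by move=> /hro hr'; have := vgeM (vge_val p) hr'; rewrite vp addr0.
have hpr' r : r \in reps -> vge c%:Z (p * r) by move/hpr; apply: vgeW; lia.
exists [seq x + p * r | x <- l, r <- reps]; split.
- by rewrite size_allpairs hs expnSr.
- move=> y /allpairsP [[x r] [/= hx hr' ->]]; have [hx1 hx2] := hl x hx.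
  split; first by apply: vgeD (vgeW _ (hpr' _ hr')).
  by rewrite addrAC; apply: vgeD (hpr' _ hr').
apply: (pairwise_allpairs hp).
  move=> x; rewrite pairwise_map; apply: sub_pairwise hr => r r' /asboolPn hn.
  apply/asboolPn => /congr_modE; apply: contra_not hn.
  have -> : x + p * r - (x + p * r') = p * (r - r') by ring.
  move=> h; apply/congr_modE.
  have := vgeM h (vge_val p^-1); rewrite valV ?piX_neq0 // vp mulrC mulKf ?piX_neq0 //.
  by apply: vgeW; lia.
move=> x x' r r' /asboolPn hn hr1 hr2; apply/asboolPn => /congr_modE hc; apply: hn.
apply/congr_modE; have -> : x - x' = (x + p * r - (x' + p * r')) - p * (r - r') by ring.
apply: vgeB; first by apply: vgeW hc; lia.
by rewrite mulrBr; apply: vgeW (vgeB (hpr _ hr1) (hpr _ hr2)); lia.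
Qed.

Lemma residue_card_ge2 : (2 <= q)%N.
Proof.
have [reps [hsz [_ [_ hcov]]]] := lf_residue hK; rewrite -hsz.
have [r0 h0 /congr_modE c0] := hcov 0 (or_introl (erefl _)).
have [r1 h1 /congr_modE c1] : exists2 r, r \in reps & congr_mod v pi 1 1 r.
  by apply: hcov; right; rewrite val1.
case: reps {hsz hcov} h0 h1 => [|a [|b s]] //; rewrite !inE => /eqP e0 /eqP e1; exfalso.
have := vgeB c1 c0; rewrite e0 e1 (_ : 1 - a - (0 - a) = 1); last by ring.
by case=> [/eqP|]; [rewrite oner_eq0|rewrite val1].
Qed.

Section HaarMeasure.
Variable R : realType.

Definition incongruent_in (N : nat) (S : set K) (l : seq K) : Prop :=
  (forall x, x \in l -> inO v x /\ S x) /\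
  (forall i j, (i < j < size l)%N -> ~ congr_mod v pi N (nth 0 l i) (nth 0 l j)).

Lemma size_incongruent_in_le N S l : incongruent_in N S l -> (size l <= q ^ N)%N.
Proof.
have [reps [hsz [_ [_ hcov]]]] := lf_residue hK; rewrite -hsz.
by move=> [hl hi]; apply: (size_incongruent_le hcov) => // x /hl [].
Qed.

Lemma nclasses_ge N S l : incongruent_in N S l -> (size l)%:R <= nclasses R v pi N S.
Proof.
move=> hl; rewrite /nclasses; apply: ub_le_sup; last by exists l.
exists (q ^ N)%:R => _ [l' hl' <-]; rewrite ler_nat; exact: (size_incongruent_in_le hl').
Qed.

Lemma haar_o_empty (S : set K) : (forall x, ~ S x) -> haar_o R v pi q S = 0.
Proof.
move=> hS; have ncl0 N : nclasses R v pi N S = 0.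
  rewrite /nclasses; apply: sup_eq_max; first by exists [::] => //; split=> // i j /andP [].
  move=> y [[|x l] [hl _] <-] //.
  by have [_ /hS] := hl x (mem_head _ _).
rewrite /haar_o; apply: inf_eq_min; first by exists 0%N => //; rewrite ncl0 mul0r.
by move=> y [N _ <-]; rewrite ncl0 mul0r.
Qed.

Section Ball.
Variables (S : set K) (a : K) (c : nat).
Hypotheses (ha : inO v a) (hS : forall x, S x <-> inO v x /\ vge c%:Z (x - a)).

Lemma incongruent_in_ball N : exists2 l, incongruent_in N S l & size l = (q ^ (N - c))%N.
Proof.
have [reps [hsz [hro [hinc _]]]] := lf_residue hK.
have [l [hs hl hp]] := incongruent_ball_family hro hinc c (N - c) ha.
exists l; last by rewrite hs hsz.
split; first by move=> x /hl [h1 h2]; split=> //; apply/hS.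
move=> i j /andP [hij hj]; case: (leqP c N) => hcN; last first.
  by move: hij hj; rewrite hs (_ : N - c = 0)%N ?expn0; lia.
move/(pairwiseP 0): hp => /(_ i j); rewrite subnKC // => hp.
by apply/asboolPn; apply: hp; rewrite ?inE // (ltn_trans hij hj).
Qed.

Lemma nclasses_ball : nclasses R v pi c S = 1.
Proof.
rewrite /nclasses; apply: sup_eq_max.
  by have [l hl hs] := incongruent_in_ball c; exists l => //; rewrite hs subnn expn0.
move=> y [l [hl hi] <-]; rewrite lern1 leqNgt; apply/negP => hs.
have [_ /hS [_ g0]] := hl _ (mem_nth 0 (ltnW hs)).
have [_ /hS [_ g1]] := hl _ (mem_nth 0 hs).
apply: (hi 0%N 1%N); first by rewrite hs.
apply/congr_modE.
have -> : nth 0 l 0 - nth 0 l 1 = (nth 0 l 0 - a) - (nth 0 l 1 - a) by ring.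
exact: vgeB.
Qed.

Lemma haar_o_ball : haar_o R v pi q S = ((q%:R : R) ^+ c)^-1.
Proof.
have Q1 : 1 <= (q%:R : R) by rewrite ler1n; have := residue_card_ge2; lia.
have Q0 : 0 < (q%:R : R) by apply: lt_le_trans Q1.
rewrite /haar_o; apply: inf_eq_min; first by exists c => //; rewrite nclasses_ball div1r.
move=> _ [N _ <-]; have [l hl hs] := incongruent_in_ball N.
rewrite ler_pdivlMr ?exprn_gt0 // mulrC ler_pdivrMr ?exprn_gt0 //.
apply: le_trans (ler_wpM2r (ltW (exprn_gt0 c Q0)) (nclasses_ge hl)).
by rewrite hs natrX -exprD; apply: ler_weXn2l => //; lia.
Qed.

End Ball.
End HaarMeasure.

Lemma Xl_Dsqr (R : realType) (D t : K) (d T E l : nat) :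
  (2 : K) != 0 -> v 2 = E%:Z -> v D = 0 -> (~ exists y : K, D = y ^+ 2) ->
  (forall x : K, qdefect v D x <-> in_ideal v (pi ^+ d) x) ->
  t != 0 -> v t = T%:Z ->
  Xl R v pi q (fun x => D * x ^+ 2) (t ^+ 2) l =
  if (E + l <= 2 * T + d)%N then ((q%:R : R) ^+ ((E + l + 1) %/ 2))^-1 else 0.
Proof.
move=> h2 hE vD hDns hdef t0 hT; have D0 := nonsquare_neq0 hDns.
have b0 : 2 * pi ^+ l != 0 by rewrite mulf_neq0 ?piX_neq0.
have vb : v (2 * pi ^+ l) = (E + l)%N%:Z by rewrite valM ?piX_neq0 // hE val_piX.
set c := ((E + l + 1) %/ 2)%N.
rewrite /Xl; case: ifP => hn; last first.
  apply: haar_o_empty => x [_]; rewrite in_idealE // vb.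
  by apply: (Dsqr_congr_none (d := d)) => //; [exact: val_sub_sqr_le|rewrite hT; lia].
case: (leqP (E + l) (2 * T)) => hn2.
  apply: (@haar_o_ball R _ 0 c); first by left.
  move=> x /=; rewrite subr0 in_idealE // vb.
  by rewrite (Dsqr_congr_ball0 (c := c) x vD D0 t0) ?hT //; lia.
have d1 : (1 <= d)%N by lia.
have [s0 [hs0 s00 vs0]] := defect_unit_witness vD hDns hdef d1.
have d2e := defect_le_val2 vD hDns hdef h2.
apply: (@haar_o_ball R _ (t / s0) c).
  by right; rewrite valM ?invr_neq0 // valV // vs0 hT; lia.
move=> x /=; rewrite in_idealE // vb.
case: (pselect (inO v x)) => hx; last by split => -[].
by rewrite (Dsqr_congr_ball (c := c) (d := d) vD t0 s00 vs0 h2 hs0 d1 d2e) ?hT //; lia.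
Qed.

Lemma absv_pi (R : realType) : absv R v q pi = (q%:R : R)^-1.
Proof. by rewrite /absv (negbTE pi_neq0) val_pi exprN1. Qed.

Lemma absv_le_absv2 (R : realType) (t : K) (d T E : nat) :
  (2 : K) != 0 -> v 2 = E%:Z -> t != 0 -> v t = T%:Z ->
  (absv R v q (pi ^+ d * t ^+ 2) <= absv R v q 2) = (E <= d + 2 * T)%N.
Proof.
move=> h2 hE t0 hT.
have p0 : pi ^+ d * t ^+ 2 != 0 by rewrite mulf_neq0 ?piX_neq0 ?expf_neq0.
rewrite /absv (negbTE p0) (negbTE h2) valM ?piX_neq0 ?expf_neq0 // val_piX val_sqr // hT hE.
rewrite (_ : d%:Z + (T%:Z + T%:Z) = (d + 2 * T)%N%:Z); last by lia.
rewrite -!exprnN lef_pV2 ?posrE ?exprn_gt0 ?ltr0n ?ler_eXn2l ?ltr1n //;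
  have := residue_card_ge2; lia.
Qed.

End Valuation.

Local Open Scope complex_scope.

Lemma series_to_finite (R : realType) (a : nat -> R[i]) (N : nat) (L : R[i]) :
  (forall i, (N <= i)%N -> a i = 0) -> \sum_(i < N) a i = L -> series_to a L.
Proof.
move=> ha <- eps heps; exists N => n hn; rewrite -(subnKC hn) big_split_ord /=.
have -> : \sum_(i < n - N) a (N + i)%N = 0 by apply: big1 => i _; apply/ha/leq_addr.
by rewrite addr0 subrr normr0 -(raddf0 (real_complex R)) ltcR.
Qed.

Lemma sub1_mul_invq_neq0 (R : realType) (Q : R) (z : R[i]) :
  1 <= Q -> `|z| < 1 -> 1 - z * (z * (Q^-1)%:C) != 0.
Proof.
move=> Q1 hz; rewrite subr_eq0 eq_sym; apply/negP => /eqP h1.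
have hc0 : (0 : R[i]) <= (Q^-1)%:C by rewrite -(raddf0 (real_complex R)) lecR invr_ge0 (le_trans ler01).
have hc1 : (Q^-1)%:C <= (1 : R[i]) by rewrite -(rmorph1 (real_complex R)) lecR invf_le1 // (lt_le_trans ltr01).
have : `|z * (z * (Q^-1)%:C)| < 1.
  rewrite !normrM (ger0_norm hc0); apply: (le_lt_trans _ hz).
  rewrite mulrA -[X in _ <= X]mulr1.
  apply: ler_pM => //; first by rewrite mulr_ge0.
  by rewrite -[X in _ <= X]mulr1 ler_wpM2l // ltW.
by rewrite h1 normr1 ltxx.
Qed.

Section CeilHalfGeometricSum.
Variables (R : realType) (Q : R) (z : R[i]) (E : nat).
Hypothesis Q0 : 0 < Q.
Let w := z * (Q^-1)%:C.
Let x := z * w.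
Hypothesis x1 : 1 - x != 0.
Let A := ((Q ^+ ((E + 1) %/ 2))^-1)%:C.
Let B := ((Q ^+ (E %/ 2))^-1)%:C.
Let f (l : nat) := z ^+ l * ((Q ^+ ((E + l + 1) %/ 2))^-1)%:C.
Let G j := (1 - x ^+ j) / (1 - x).

Lemma geoS j : G j.+1 = G j + x ^+ j.
Proof. by rewrite /G exprS; field. Qed.

(* Grouping the terms of index 2j and 2j+1 turns the series into two
   geometric series of ratio x = z^2 / Q. *)
Lemma term_even j : f (2 * j) = A * x ^+ j.
Proof.
have Q0' : Q%:C != 0 by rewrite (inj_eq (@complexI _)) gt_eqF.
rewrite /f (_ : (E + 2 * j + 1) %/ 2 = (E + 1) %/ 2 + j)%N; last by lia.
rewrite /A /x /w exprD mulnC exprM !fmorphV !rmorphM !rmorphXn /= !exprMn exprVn.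
by field; rewrite !expf_neq0.
Qed.

Lemma term_odd j : f (2 * j + 1) = w * B * x ^+ j.
Proof.
have Q0' : Q%:C != 0 by rewrite (inj_eq (@complexI _)) gt_eqF.
rewrite /f (_ : (E + (2 * j + 1) + 1) %/ 2 = E %/ 2 + j + 1)%N; last by lia.
rewrite /B /x /w !exprD expr1 expr0 mulr1 !fmorphV !rmorphM !rmorphXn /=.
by rewrite !exprMn exprVn; field; rewrite !expf_neq0.
Qed.

Lemma sum_parity j : \sum_(l < 2 * j) f l = A * G j + w * B * G j /\
  \sum_(l < (2 * j).+1) f l = A * G j.+1 + w * B * G j.
Proof.
elim: j => [|j [IHeven IHodd]].
  have := term_even 0; rewrite muln0 expr0 mulr1 => f0.
  by rewrite big_ord0 big_ord1 f0 geoS /G !expr0 subrr !mul0r !mulr0 !add0r addr0 mulr1.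
have Seven : \sum_(l < 2 * j.+1) f l = A * G j.+1 + w * B * G j.+1.
  rewrite (_ : 2 * j.+1 = (2 * j).+2)%N; last by lia.
  by rewrite big_ord_recr /= IHodd -[(2 * j).+1]addn1 term_odd geoS; ring.
by split=> //; rewrite big_ord_recr /= Seven term_even !geoS; ring.
Qed.

Lemma sum_ceil_half_geo M :
  \sum_(l < M.+1) f l = A * G (M.+2 %/ 2)%N + w * B * G (M.+1 %/ 2)%N.
Proof.
have [j [->|->]] : exists j, M.+1 = (2 * j)%N \/ M.+1 = (2 * j).+1.
  by exists (M.+1 %/ 2)%N; lia.
  rewrite (proj1 (sum_parity j)) (_ : (2 * j).+1 %/ 2 = j)%N; last by lia.
  by rewrite (_ : (2 * j) %/ 2 = j)%N //; lia.
rewrite (proj2 (sum_parity j)) (_ : (2 * j).+2 %/ 2 = j.+1)%N; last by lia.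
by rewrite (_ : (2 * j).+1 %/ 2 = j)%N //; lia.
Qed.

End CeilHalfGeometricSum.

Unset Implicit Arguments.
Set Strict Implicit.

Theorem proposition5p1 (R : realType) (K : fieldType) (v : K -> int) (pi : K) (q : nat)
    (hK : is_local_field v pi q)
    (h2 : (2 : K) != 0) (hres2 : (0 < v 2)%R)
    (Delta : K) (hDn0 : Delta != 0) (hDunit : v Delta = 0)
    (hDns : ~ exists y : K, Delta = y ^+ 2)
    (d : nat) (hdef : forall x : K, qdefect v Delta x <-> in_ideal v (pi ^+ d) x)
    (z : R[i]) (hz : `|z| < 1)
    (t : K) (ht0 : t != 0) (T : nat) (hT : v t = T%:Z) :
  let e : int := v 2 in
  let w : R[i] := z * ((q%:R : R) ^-1)%:C in
  let B : K -> K := fun x => Delta * x ^+ 2 in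
  let api : R := @absv R K v q pi in
  (@absv R K v q (pi ^+ d * t ^+ 2) <= @absv R K v q 2 ->
    @XB_is R K v pi q B z (t ^+ 2)
      ((api ^ (divz (e + 1) 2))%:C
         * (1 - (z * w) ^ (T%:Z + divz (d%:Z + 1 - e + 1) 2)) / (1 - z * w)
       + w * (api ^ (divz e 2))%:C
         * (1 - (z * w) ^ (T%:Z + divz (d%:Z + 1 - e) 2)) / (1 - z * w))) /\
  (~ (@absv R K v q (pi ^+ d * t ^+ 2) <= @absv R K v q 2) ->
    @XB_is R K v pi q B z (t ^+ 2) 0).
Proof.
move=> e w B api; rewrite /e /w /B /api.
have [E hE] : exists E : nat, v 2 = E%:Z by exists (absz (v 2)); rewrite gez0_abs // ltW.
have Q1 : 1 <= (q%:R : R) by rewrite ler1n; have := residue_card_ge2 hK; lia.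
have hX l := Xl_Dsqr hK R l h2 hE hDunit hDns hdef ht0 hT.
rewrite (absv_le_absv2 hK R d h2 hE ht0 hT); split => hc; last first.
  apply: (series_to_finite (N := 0)) => [i _|]; last exact: big_ord0.
  by rewrite hX ifF ?raddf0 ?mulr0 //; lia.
set M := (2 * T + d - E)%N.
apply: (series_to_finite (N := M.+1)) => [i hi|].
  by rewrite hX ifF ?raddf0 ?mulr0 //; lia.
rewrite (eq_bigr (fun l : 'I_M.+1 => z ^+ l * (((q%:R : R) ^+ ((E + l + 1) %/ 2))^-1)%:C));
  last by move=> i _; rewrite hX ifT //; have := ltn_ord i; lia.
rewrite (sum_ceil_half_geo E (lt_le_trans ltr01 Q1) (sub1_mul_invq_neq0 Q1 hz)).
rewrite hE absv_pi //.
have -> : divz (E%:Z + 1) 2 = ((E + 1) %/ 2)%N by lia.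
have -> : divz E%:Z 2 = (E %/ 2)%N by lia.
have -> : T%:Z + divz (d%:Z + 1 - E%:Z + 1) 2 = (M.+2 %/ 2)%N by lia.
have -> : T%:Z + divz (d%:Z + 1 - E%:Z) 2 = (M.+1 %/ 2)%N by lia.
by rewrite -!exprnP !exprVn !mulrA.
Qed.
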